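(* Let $X$ be a compact metric space and let $f\colon X\to X$ be a homeomorphism which is positively $n$-expansive (for some integer $n\geq 1$) and has the L-shadowing property. Then $X$ is finite.
   Context: Let $(X,d)$ be a metric space and $f\colon X\to X$. For $x\in X$ and $c>0$, the local stable set of size $c$ is $W^s_c(x)=\{y\in X: d(f^k(y),f^k(x))\leq c \text{ for every } k\geq 0\}$. The map $f$ is positively $n$-expansive if there exists $c>0$ such that for every $x\in X$ the set $W^s_c(x)$ contains at most $n$ distinct points. For $\delta>0$, a sequence $(x_k)_{k\in\mathbb{Z}}\subset X$ is a $\delta$-pseudo orbit if $d(f(x_k),x_{k+1})<\delta$ for all $k$; it is a two-sided limit pseudo orbit if $d(f(x_k),x_{k+1})\to 0$ as $|k|\to\infty$. A point $z$ $\varepsilon$-shadows $(x_k)_{k\in\mathbb{Z}}$ if $d(f^k(z),x_k)<\varepsilon$ for all $k\in\mathbb{Z}$, and $z$ two-sided limit shadows $(x_k)$ if $d(f^k(z),x_k)\to0$ as $|k|\to\infty$. A homeomorphism $f$ has the L-shadowing property if for every $\varepsilon>0$ there is $\delta>0$ such that every $\delta$-pseudo orbit $(x_k)_{k\in\mathbb{Z}}$ which is also a two-sided limit pseudo orbit is both $\varepsilon$-shadowed and two-sided limit shadowed by one and the same point $z\in X$. *)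

From HB Require Import structures.
From mathcomp Require Import all_boot all_order all_algebra.
From mathcomp Require Import all_classical all_reals all_analysis.
Set Implicit Arguments. Unset Strict Implicit. Unset Printing Implicit Defensive.
Import Order.TTheory GRing.Theory Num.Theory.
Local Open Scope classical_set_scope.
Local Open Scope ring_scope.

Section Defs.
Context {R : realType} {X : metricType R}.
Local Notation d := (@mdist R X).

Definition stable_set (f : X -> X) (c : R) (x : X) : set X :=
  [set y | forall k : nat, d (iter k f y) (iter k f x) <= c].

Definition pos_n_expansive (f : X -> X) (n : nat) : Prop :=
  exists2 c : R, 0 < c & forall x : X, forall s : seq X,
    uniq s -> (forall y, y \in s -> stable_set f c x y) -> (size s <= n)%N.

(* f^k for k : int, where g is the inverse of f *)
Definition iterz (f g : X -> X) (k : int) : X -> X :=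
  match k with
  | Posz m => iter m f
  | Negz m => iter m.+1 g
  end.

Definition pseudo_orbit (f : X -> X) (delta : R) (xs : int -> X) : Prop :=
  forall k : int, d (f (xs k)) (xs (k + 1)) < delta.

Definition limit_pseudo_orbit (f : X -> X) (xs : int -> X) : Prop :=
  forall e : R, 0 < e -> exists N : nat, forall k : int,
    (N <= `|k|)%N -> d (f (xs k)) (xs (k + 1)) < e.

Definition eps_shadows (f g : X -> X) (eps : R) (z : X) (xs : int -> X) : Prop :=
  forall k : int, d (iterz f g k z) (xs k) < eps.

Definition limit_shadows (f g : X -> X) (z : X) (xs : int -> X) : Prop :=
  forall e : R, 0 < e -> exists N : nat, forall k : int,
    (N <= `|k|)%N -> d (iterz f g k z) (xs k) < e.

Definition L_shadowing (f g : X -> X) : Prop :=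
  forall eps : R, 0 < eps -> exists2 delta : R, 0 < delta &
    forall xs : int -> X, pseudo_orbit f delta xs -> limit_pseudo_orbit f xs ->
      exists z : X, eps_shadows f g eps z xs /\ limit_shadows f g z xs.

End Defs.

From HB Require Import structures.
From mathcomp Require Import all_boot all_order all_algebra.
From mathcomp Require Import all_classical all_reals all_analysis.
From mathcomp Require Import finmap zify lra.
Set Implicit Arguments.
Unset Strict Implicit.
Unset Printing Implicit Defensive.
Import Order.TTheory GRing.Theory Num.Theory.
Local Open Scope classical_set_scope.
Local Open Scope ring_scope.

(* Take c > 0 from positive n-expansiveness, eps = c/4, and delta from
   L-shadowing for eps. Compactness gives finitely many centres p such that
   every x is within min(delta, eps) of one of them. Gluing the backward orbit
   of x to the forward orbit of p yields a two-sided limit pseudo-orbit with a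
   single jump of size d(x, p); its shadowing point z lies in W^s_c(p), and the
   backward orbit of z stays c/2-close to that of x. This codes every point by
   an element of the finite set E, the union of the W^s_c(p), so that points
   with equal codes have c-close backward orbits.
   Given finitely many distinct points, pick a time T after which any two of
   them have distinct codes unless they share codes at arbitrarily late times.
   Two points coded alike at time T then stay c-close along their whole forward
   orbits, so each of the #|E| code classes at time T has at most n points. *)

Lemma iterK (T : Type) (f g : T -> T) m :
  cancel f g -> cancel (iter m f) (iter m g).
Proof.
move=> fgK; elim: m => [//|m IH] x.
by rewrite iterSr [iter m.+1 f x]iterS fgK IH.
Qed.

Lemma bounded_uniq_finite_set {T : choiceType} (A : set T) n :
  (forall s : seq T, uniq s -> (forall y, y \in s -> A y) -> (size s <= n)%N) ->
  finite_set A.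
Proof.
move=> Abound; apply: contrapT => /(infinite_set_fset n.+1)[B BA].
by rewrite ltnNge (Abound _ (fset_uniq B)) // => y /BA.
Qed.

Lemma near_all_in {T} {I : choiceType} (F : set_system T) (P : I -> T -> Prop)
    (r : seq I) : Filter F ->
  (forall i, i \in r -> \forall t \near F, P i t) ->
  \forall t \near F, forall i, i \in r -> P i t.
Proof.
move=> FF rP; apply: filterS (filter_bigI (D := [fset i | i in r]%fset) FF _).
  by move=> t rt i ir; apply: rt; rewrite /= inE.
by move=> i; rewrite inE => /rP.
Qed.

Lemma count_preim_le (T U : eqType) (h : T -> U) (E : seq U) (s : seq T) n :
  (forall e, e \in E -> (count (fun a => h a == e) s <= n)%N) ->
  (count (fun a => h a \in E) s <= size E * n)%N.
Proof.
elim: E => [|e E IH] fibre_le.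
  by rewrite (eq_count (a2 := pred0)) ?count_pred0.
rewrite (eq_count (a2 := predU (fun a => h a == e) (fun a => h a \in E)));
  last by move=> a; rewrite /= inE.
have := count_predUI (fun a => h a == e) (fun a => h a \in E) s.
have := fibre_le e (mem_head _ _).
have : (count (fun a => h a \in E) s <= size E * n)%N.
  by apply: IH => e' e'E; apply: fibre_le; rewrite inE e'E orbT.
rewrite /= mulSn; lia.
Qed.

Section BackwardCode.
Context {R : realType} {X : metricType R}.
Variables (f g : X -> X) (c : R) (n : nat).
Hypothesis fgK : cancel f g.
Hypothesis stable_size : forall x (s : seq X),
  uniq s -> (forall y, y \in s -> stable_set f c x y) -> (size s <= n)%N.
Variables (E : {fset X}) (code : X -> X).
Hypothesis code_in : forall x, code x \in E.
Hypothesis code_close :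
  forall x m, mdist (iter m g (code x)) (iter m g x) <= c / 2.

Lemma same_code_backward x y : code x = code y ->
  forall m, mdist (iter m g x) (iter m g y) <= c.
Proof.
move=> xy m; apply: le_trans (metric_triangle _ (iter m g (code x)) _) _.
have := code_close x m; have := code_close y m.
by rewrite metric_sym xy; lra.
Qed.

Definition frequently_same_code a b := forall k, exists2 t, (k <= t)%N &
  code (iter t f a) = code (iter t f b).

Lemma frequently_same_code_stable a b :
  frequently_same_code a b -> stable_set f c a b.
Proof.
move=> ab k; have [t kt /same_code_backward /(_ (t - k)%N)] := ab k.
by rewrite -(subnK kt) addnK !iterD !iterK // metric_sym.
Qed.

Lemma eventually_code_separated (s : seq X) :
  \forall t \near \oo, forall a, a \in s -> forall b, b \in s ->
    frequently_same_code a b \/ code (iter t f a) <> code (iter t f b).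
Proof.
apply: near_all_in => a _; apply: near_all_in => b _.
have [ab|] := pselect (frequently_same_code a b).
  by apply: nearW => t; left.
move=> /existsNP[k never]; exists k => // t /= kt; right => same.
by apply: never; exists t.
Qed.

Lemma uniq_size_le_code (s : seq X) : uniq s -> (size s <= #|` E| * n)%N.
Proof.
move=> s_uniq; have [T _ sepT] := eventually_code_separated s.
have fibre_le e : (count (fun a => code (iter T f a) == e) s <= n)%N.
  rewrite -size_filter; case fibre: [seq a <- s | _] => [//|a0 r].
  have : a0 \in [seq a <- s | code (iter T f a) == e] by rewrite fibre mem_head.
  rewrite mem_filter => /andP[/eqP a0e a0s]; rewrite -fibre.
  apply: (stable_size (x := a0)); first exact: filter_uniq.
  move=> b; rewrite mem_filter => /andP[/eqP be bs].
  have [|//] := sepT T (leqnn T) a0 a0s b bs; last by rewrite a0e be.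
  exact: frequently_same_code_stable.
rewrite -(count_predT s) (eq_count (a2 := fun a => code (iter T f a) \in E)).
  exact: count_preim_le.
by move=> a; rewrite code_in.
Qed.

Lemma finite_space_of_code : finite_set [set: X].
Proof.
exact: bounded_uniq_finite_set (fun s s_uniq _ => uniq_size_le_code s_uniq).
Qed.

End BackwardCode.

Section PointedCompactNet.
Context {R : realType} {X : metricType R} (x0 : X).
(* [compact_cover] needs a pointed space; [x0] only provides that structure. *)
HB.instance Definition _ := isPointed.Build X x0.

Lemma pointed_compact_finite_net {r : R} : compact [set: X] -> 0 < r ->
  exists2 D : set X, finite_set D & forall x, exists2 p, D p & mdist p x < r.
Proof.
rewrite (@compact_cover X) => cptX r0.
have [D' _ cov] :
    finite_subset_cover [set: X] (fun p => interior (ball p r)) [set: X].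
  apply: cptX => [p _|x _]; first exact: open_interior.
  by exists x => //; exact: nbhsx_ballx.
exists [set` D']; first exact: finite_fset.
move=> x; have [p /= pD' /nbhs_singleton] := cov x I.
by rewrite ballEmdist; exists p.
Qed.

End PointedCompactNet.

Lemma compact_finite_net {R : realType} {X : metricType R} {r : R} :
  compact [set: X] -> 0 < r ->
  exists2 D : set X, finite_set D & forall x, exists2 p, D p & mdist p x < r.
Proof.
have [[x0 _]|noX] := pselect (exists x : X, True).
  exact: pointed_compact_finite_net.
by move=> _ _; exists set0 => [|x]; [exact: finite_set0|case: noX; exists x].
Qed.

Section JunctionShadowing.
Context {R : realType} {X : metricType R}.
Variables (f g : X -> X) (eps delta : R).
Hypothesis gfK : cancel g f.
Hypothesis shadowing : forall xs : int -> X,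
  pseudo_orbit f delta xs -> limit_pseudo_orbit f xs ->
  exists z, eps_shadows f g eps z xs /\ limit_shadows f g z xs.

Definition junction (p x : X) (k : int) : X :=
  match k with Posz m => iter m f p | Negz m => iter m.+1 g x end.

Lemma junction_step p x k :
  k != -1 -> f (junction p x k) = junction p x (k + 1).
Proof. by case: k => [m|[|m]] //= _; rewrite ?addn1 ?subn1 ?gfK. Qed.

Lemma junction_pseudo_orbit p x :
  mdist p x < delta -> pseudo_orbit f delta (junction p x).
Proof.
move=> px k; have [->|k_neq] := eqVneq k (-1).
  by rewrite /= gfK metric_sym.
by rewrite junction_step // mdistxx (le_lt_trans (mdist_ge0 _ _) px).
Qed.

Lemma junction_limit_pseudo_orbit p x : limit_pseudo_orbit f (junction p x).
Proof.
move=> e e0; exists 2%N => k k2; rewrite junction_step ?mdistxx //.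
by apply: contraTneq k2 => ->.
Qed.

Lemma shadow_junction p x : mdist p x < Num.min delta eps -> exists z,
  stable_set f eps p z /\ forall m, mdist (iter m g z) (iter m g x) <= eps *+ 2.
Proof.
rewrite lt_min => /andP[px_delta px_eps].
have [z [zsh _]] := shadowing
  (junction_pseudo_orbit px_delta) (@junction_limit_pseudo_orbit p x).
have eps_ge0 : 0 <= eps by rewrite (le_trans (mdist_ge0 p x)) ?ltW.
exists z; split=> [k|[|m]]; first exact/ltW/(zsh (Posz k)).
  apply: le_trans (metric_triangle z p x) _.
  by rewrite mulr2n lerD ?ltW //; exact: (zsh 0).
by apply/ltW/(lt_le_trans (zsh (Negz m))); rewrite mulr2n lerDl.
Qed.

End JunctionShadowing.

Theorem theoremA (R : realType) (X : metricType R) (f g : X -> X) (n : nat) :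
  compact [set: X] ->
  continuous f -> continuous g -> cancel f g -> cancel g f ->
  (1 <= n)%N ->
  pos_n_expansive f n ->
  L_shadowing f g ->
  finite_set [set: X].
Proof.
move=> cptX _ _ fgK gfK _ [c c0 stable_size] Lsh.
pose eps := c / 4.
have eps0 : 0 < eps by rewrite divr_gt0.
have [delta delta0 shadowing] := Lsh eps eps0.
have r0 : 0 < Num.min delta eps by rewrite lt_min delta0 eps0.
have [D Dfin Dnet] := compact_finite_net cptX r0.
have /finite_fsetP[B EB] : finite_set (\bigcup_(p in D) stable_set f c p).
  apply: bigcup_finite => // p _.
  exact: bounded_uniq_finite_set (stable_size p).
have /choice[code codeP] : forall x, exists z,
    z \in B /\ forall m, mdist (iter m g z) (iter m g x) <= c / 2.
  move=> x; have [p Dp px] := Dnet x.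
  have [z [zp zx]] := shadow_junction gfK shadowing px.
  exists z; split=> [|m]; last by rewrite (le_trans (zx m)) // /eps; lra.
  have : (\bigcup_(p in D) stable_set f c p) z.
    by exists p => // k; rewrite (le_trans (zp k)) // /eps; lra.
  by rewrite EB.
exact: (finite_space_of_code fgK stable_size
  (fun x => (codeP x).1) (fun x => (codeP x).2)).
Qed.
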